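(* Let $i\in\mathbb{N}=\{0,1,2,\dots\}$ and let $w\in\{0,1\}^*$ be a $\frac{7}{3}$-power-free word with $|w|=5\cdot 2^i-1$. Let $a\in\{0,1\}$. Then the word $waw$ has a subword $x$ with $|x|\leq 5\cdot 2^i$ such that $x$ is a $\beta$-power for some rational $\beta\ge\frac{7}{3}$.
   Context: A word $w'$ is a subword of $w$ if $w=uw'v$ for some words $u,v$. For a rational $\beta\ge 1$, a $\beta$-power is a word of the form $y^ny'$ with $y$ a nonempty word, $y'$ a prefix of $y$, $n$ a nonnegative integer and $n+|y'|/|y|=\beta$. A word is $\alpha$-power-free if none of its subwords is a $\beta$-power for any rational $\beta\geq\alpha$. *)

From mathcomp Require Import all_boot all_order all_algebra.
Set Implicit Arguments. Unset Strict Implicit. Unset Printing Implicit Defensive.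
Import Order.TTheory GRing.Theory Num.Theory.

Definition subword (x w : seq bool) : Prop :=
  exists u v, w = u ++ x ++ v.

Definition is_beta_power (x : seq bool) (beta : rat) : Prop :=
  exists (y y' : seq bool) (n : nat),
    y != [::] /\ prefix y' y /\ x = flatten (nseq n y) ++ y' /\
    beta = (n%:R + (size y')%:R / (size y)%:R)%R.

Definition power_free (alpha : rat) (w : seq bool) : Prop :=
  forall x, subword x w -> forall beta : rat, (alpha <= beta)%R -> ~ is_beta_power x beta.

From mathcomp Require Import all_boot all_order all_algebra.
From mathcomp Require Import zify.
From Stdlib Require Import Classical.
Import Order.TTheory GRing.Theory Num.Theory.

(* Since w a w = (w a) w contains every factor of length at most N = 5 2^i
   of the periodic word (w a)^oo, it suffices to show that every N-periodic
   binary sequence has a factor of length at most N that is a 7/3-power.  This goes by induction on i: for i = 0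
   the 32 cyclic words of length 5 are checked.  For period 2N, if s has no
   such factor of length at most 2N, an exhaustive check of 9-letter windows
   shows that positions d with s d = s (d + 1) are never an odd distance
   apart, so s (2k + e + 1) = ~~ s (2k + e) for a fixed offset e.  Then
   t k = s (2k + e) has period N, and a 7/3-power in t with period p and
   length L gives one in s with period 2p and length 2L. *)

Set Implicit Arguments.
Unset Strict Implicit.
Unset Printing Implicit Defensive.

Definition period (x : seq bool) p :=
  forall k, k + p < size x -> nth false x k = nth false x (k + p).

Lemma nth_period_mod x p k :
  0 < p -> period x p -> k < size x -> nth false x k = nth false x (k %% p).
Proof.
move=> p_gt0 x_per; elim/ltn_ind: k => k IH k_lt.
case: (ltnP k p) => [k_lt_p | k_ge_p]; first by rewrite modn_small.
rewrite -[in LHS](subnK k_ge_p) -x_per ?subnK // IH; [|lia..].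
by rewrite -[in RHS](subnK k_ge_p) modnDr.
Qed.

Lemma eq_flatten_nseq_take (x y : seq bool) n r :
  r <= size y -> size x = n * size y + r ->
  (forall k, k < size x -> nth false x k = nth false y (k %% size y)) ->
  x = flatten (nseq n y) ++ take r y.
Proof.
move=> r_le; elim: n x => [|n IH] x size_x x_nth.
  apply: (@eq_from_nth _ false) => [|k]; first by rewrite size_takel.
  by move=> k_lt; rewrite /= nth_take ?x_nth ?modn_small //; lia.
rewrite -(cat_take_drop (size y) x) /= -catA; congr (_ ++ _).
  apply: (@eq_from_nth _ false) => [|k]; first by rewrite size_takel //; lia.
  rewrite size_takel => [k_lt|]; last by lia.
  by rewrite nth_take // x_nth ?modn_small //; lia.
apply: IH => [|k]; rewrite size_drop size_x; first by lia.
by move=> k_lt; rewrite nth_drop x_nth ?modnDl //; lia.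
Qed.

Lemma period_is_beta_power x p :
  0 < p <= size x -> period x p -> is_beta_power x ((size x)%:R / p%:R).
Proof.
case/andP=> p_gt0 p_le x_per; set y := take p x.
have size_y : size y = p by rewrite size_takel.
have r_lt : size x %% p < p by rewrite ltn_pmod.
exists y, (take (size x %% p) y), (size x %/ p); split; [|split; [|split]].
- by rewrite -size_eq0 size_y -lt0n.
- exact: prefix_take.
- apply: eq_flatten_nseq_take; rewrite size_y -?divn_eq //; first exact: ltnW.
  by move=> k k_lt; rewrite nth_take ?ltn_pmod // -nth_period_mod.
- rewrite size_takel ?size_y ?(ltnW r_lt) // {1}(divn_eq (size x) p).
  by rewrite natrD natrM mulrDl mulfK // pnatr_eq0 -lt0n.
Qed.

Lemma ler_7_3_ratio (L p : nat) :
  0 < p -> 7 * p <= 3 * L -> (7%:R / 3%:R <= L%:R / p%:R :> rat)%R.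
Proof.
move=> p_gt0 p_le; rewrite ler_pdivlMr ?ltr0n // mulrAC ler_pdivrMr ?ltr0n //.
by rewrite -!natrM ler_nat [L * 3]mulnC.
Qed.

Lemma period_cat_cons (w : seq bool) a : period (w ++ a :: w) (size w).+1.
Proof.
move=> k; rewrite size_cat /= => k_lt.
have k_lt_w : k < size w by lia.
rewrite !nth_cat k_lt_w ifN; last by lia.
by rewrite (_ : _ - _ = k.+1) //; lia.
Qed.

Definition periodic (s : nat -> bool) N := forall k, s (k + N) = s k.

Definition periodic_on (s : nat -> bool) j L p :=
  forall k, k + p < L -> s (j + k) = s (j + k + p).

Definition has_power73 (s : nat -> bool) K := exists j L p,
  [/\ 0 < p, L <= K, 7 * p <= 3 * L & periodic_on s j L p].

Lemma has_power73_leq s K K' : K <= K' -> has_power73 s K -> has_power73 s K'.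
Proof.
move=> le_K [j [L [p [p_gt0 L_le p_le per]]]].
by exists j, L, p; split=> //; apply: leq_trans le_K.
Qed.

Definition power73_factorb (u : seq bool) K :=
  has (fun j => has (fun L => (j + L <= size u) && has (fun p =>
    [&& 0 < p, 7 * p <= 3 * L &
        all (fun k => nth false u (j + k) == nth false u (j + k + p)) (iota 0 (L - p))])
    (iota 0 L)) (iota 0 K.+1)) (iota 0 (size u)).

Lemma has_power73_mkseq s m n K :
  power73_factorb (mkseq (fun k => s (m + k)) n) K -> has_power73 s K.
Proof.
case/hasP=> j _ /hasP [L]; rewrite mem_iota size_mkseq => /andP [_ L_le].
case/andP=> jL_le /hasP [p _] /and3P [p_gt0 p_le /allP u_per].
exists (m + j), L, p; split=> // k k_lt.
have k_in : k \in iota 0 (L - p) by rewrite mem_iota; lia.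
have /eqP := u_per k k_in.
by rewrite !nth_mkseq -?addnA //; lia.
Qed.

Fixpoint words n : seq (seq bool) :=
  if n is n.+1 then [seq true :: u | u <- words n] ++ [seq false :: u | u <- words n]
  else [:: [::]].

Lemma mem_words n u : (u \in words n) = (size u == n).
Proof.
have cons_inj b : injective (cons b) by move=> ? ? [].
elim: n u => [|n IH] [|b u] //=; rewrite mem_cat.
  by apply/negbTE/norP; split; apply/mapP => -[].
have notin_other c c' W : c != c' -> (c :: u \in [seq c' :: v | v <- W]) = false.
  by move=> neq; apply/mapP => -[v _ [eq_c _]]; rewrite eq_c eqxx in neq.
by case: b; rewrite (mem_map (cons_inj _ _)) IH eqSS notin_other ?orbF.
Qed.

Definition repeat_at (s : nat -> bool) d := s d == s d.+1.

Lemma window_check : all (fun u => let d := repeat_at (nth false u) in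
  ~~ power73_factorb u 9 ==> (d 1 ==> ~~ (d 2 || d 4)) && [|| d 1, d 2, d 3 | d 4])
  (words 9).
Proof. by vm_compute. Qed.

Lemma cyclic_check : all (fun u => power73_factorb (u ++ u) 5) (words 5).
Proof. by vm_compute. Qed.

Section NoShortPower73.

Variables (s : nat -> bool) (K : nat).
Hypotheses (K_ge9 : 9 <= K) (no_power : ~ has_power73 s K).

Lemma window_repeats m :
  (repeat_at s m.+1 ==> ~~ (repeat_at s m.+2 || repeat_at s m.+4)) &&
  [|| repeat_at s m.+1, repeat_at s m.+2, repeat_at s m.+3 | repeat_at s m.+4].
Proof.
set u := mkseq (fun k => s (m + k)) 9.
have /allP/(_ u) := window_check; rewrite mem_words size_mkseq => /(_ isT) /=.
have /negbTE-> : ~~ power73_factorb u 9.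
  by apply/negP => /has_power73_mkseq /(has_power73_leq K_ge9).
by rewrite /repeat_at !nth_mkseq // !addnS addn0.
Qed.

Lemma repeat_at_gap13 d :
  0 < d -> repeat_at s d -> ~~ repeat_at s d.+1 && ~~ repeat_at s d.+3.
Proof.
move=> /prednK d_eq d_rep; have /andP [] := window_repeats d.-1.
by rewrite d_eq d_rep /= negb_or.
Qed.

Lemma repeat_at_next d : 0 < d -> repeat_at s d -> repeat_at s d.+2 || repeat_at s d.+4.
Proof.
move=> d_gt0 d_rep; have /andP [_] := window_repeats d.
by have /andP [/negbTE-> /negbTE->] := repeat_at_gap13 d_gt0 d_rep.
Qed.

Lemma repeat_at_odd_gap d n : 0 < d -> repeat_at s d -> ~~ repeat_at s (d + n.*2.+1).
Proof.
elim/ltn_ind: n d => -[|[|n]] IH d d_gt0 d_rep.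
- by case/andP: (repeat_at_gap13 d_gt0 d_rep); rewrite addn1.
- by case/andP: (repeat_at_gap13 d_gt0 d_rep); rewrite addn3.
case/orP: (repeat_at_next d_gt0 d_rep) => [rep2 | rep4].
- have := IH n.+1 (ltnSn _) d.+2 isT rep2.
  by rewrite (_ : d.+2 + _ = d + n.+2.*2.+1) //; lia.
- have := IH n (ltnW (ltnSn _)) d.+4 isT rep4.
  by rewrite (_ : d.+4 + _ = d + n.+2.*2.+1) //; lia.
Qed.

Lemma alternating : exists e, forall k, s (k.*2 + e).+1 = ~~ s (k.*2 + e).
Proof.
have [d d_gt0 d_rep] : exists2 d, 0 < d & repeat_at s d.
  by have /andP [_ /or4P []] := window_repeats 0; [exists 1|exists 2|exists 3|exists 4].
exists d.+1 => k; move: (repeat_at_odd_gap k d_gt0 d_rep).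
by rewrite !addnS [d + _]addnC /repeat_at; case: (s _) (s _) => [] [].
Qed.

End NoShortPower73.

Lemma has_power73_interleave (s : nat -> bool) (g : bool -> bool) e K :
  (forall k, s (k.*2 + e).+1 = g (s (k.*2 + e))) ->
  has_power73 (fun k => s (k.*2 + e)) K -> has_power73 s K.*2.
Proof.
move=> s_odd [j [L [p [p_gt0 L_le p_le t_per]]]].
exists (j.*2 + e), L.*2, p.*2; split; rewrite ?double_gt0 ?leq_double //; first lia.
move=> k; rewrite -[k]odd_double_half; set q := k./2 => k_lt.
have q_lt : q + p < L by lia.
rewrite (_ : _ + (_ + _) = (j + q).*2 + e + odd k); last by lia.
rewrite (_ : _ + p.*2 = (j + q + p).*2 + e + odd k); last by lia.
by case: (odd k); rewrite ?addn1 ?addn0 ?s_odd t_per.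
Qed.

Lemma periodic_has_power73 i s : periodic s (5 * 2 ^ i) -> has_power73 s (5 * 2 ^ i).
Proof.
elim: i s => [|i IH] s s_per.
  rewrite expn0 muln1 in s_per *.
  have /allP/(_ (mkseq s 5)) := cyclic_check; rewrite mem_words size_mkseq => /(_ isT).
  rewrite (_ : _ ++ _ = mkseq (fun k => s (0 + k)) 10) => [/has_power73_mkseq //|].
  apply: (@eq_from_nth _ false) => [|k]; rewrite size_cat !size_mkseq // => k_lt.
  rewrite [RHS]nth_mkseq // nth_cat size_mkseq; case: ltnP => k_ge; rewrite nth_mkseq //.
    by rewrite -[in RHS](subnK k_ge) s_per.
  by lia.
rewrite expnS mulnCA mul2n in s_per *.
have [//|no_power] := classic (has_power73 s (5 * 2 ^ i).*2).
have K_ge9 : 9 <= (5 * 2 ^ i).*2 by have := expn_gt0 2 i; lia.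
have [e alt] := alternating K_ge9 no_power.
apply: has_power73_interleave alt _; apply: IH => k.
by rewrite doubleD addnAC s_per.
Qed.

Lemma factor_of_has_power73 (z : seq bool) N :
  period z N -> N.*2 <= (size z).+1 ->
  has_power73 (fun k => nth false z (k %% N)) N ->
  exists x : seq bool,
    subword x z /\ size x <= N /\
    exists beta : rat, (7%:R / 3%:R <= beta)%R /\ is_beta_power x beta.
Proof.
move=> z_per size_z [j [L [p [p_gt0 L_le p_le s_per]]]].
have N_gt0 : 0 < N by lia.
have j_lt : j %% N < N by rewrite ltn_pmod.
set x := take L (drop (j %% N) z).
have size_x : size x = L by rewrite size_takel // size_drop; lia.
have x_nth k : k < L -> nth false x k = nth false z ((j + k) %% N).
  move=> k_lt; rewrite nth_take // nth_drop (nth_period_mod N_gt0 z_per) ?modnDml //.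
  by lia.
exists x; split.
  by exists (take (j %% N) z), (drop L (drop (j %% N) z)); rewrite !cat_take_drop.
split; first by rewrite size_x.
exists (L%:R / p%:R)%R; split; first exact: ler_7_3_ratio.
rewrite -size_x; apply: period_is_beta_power.
  by rewrite size_x; apply/andP; split; lia.
by move=> k; rewrite size_x => k_lt; rewrite !x_nth ?addnA; [exact: s_per | lia | lia].
Qed.

Theorem lemma6 (i : nat) (w : seq bool) (a : bool) :
  power_free (7%:R / 3%:R)%R w ->
  size w = 5 * 2 ^ i - 1 ->
  exists x : seq bool,
    subword x (w ++ a :: w) /\ size x <= 5 * 2 ^ i /\
    exists beta : rat, (7%:R / 3%:R <= beta)%R /\ is_beta_power x beta.
Proof.
move=> _ size_w; have N_gt0 : 0 < 5 * 2 ^ i by rewrite muln_gt0 expn_gt0.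
apply: factor_of_has_power73.
- by rewrite (_ : 5 * 2 ^ i = (size w).+1); [exact: period_cat_cons | lia].
- by rewrite size_cat /= size_w; lia.
- by apply: periodic_has_power73 => k; rewrite modnDr.
Qed.
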